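(* Let $G$ be a finite supersolvable group and let $A$, $B$ be conjugacy classes of $G$ such that $AB\cap \mathbf{Z}(G)\neq\emptyset$. Then $$\operatorname{dl}(G/\mathbf{C}_G(A))\le 2\,\eta(AB)-1.$$
   Context: For a nonempty subset $X\subseteq G$ that is $G$-invariant (i.e. $g^{-1}Xg=X$ for all $g\in G$), $\eta(X)$ denotes the number of distinct conjugacy classes of $G$ whose union is $X$. For conjugacy classes $A,B$, $AB=\{ab\mid a\in A,b\in B\}$ (a $G$-invariant set). $\mathbf{C}_G(A)=\{g\in G\mid g^{-1}ag=a\text{ for all }a\in A\}$, $\mathbf{Z}(G)$ is the center, and $\operatorname{dl}$ denotes derived length. *)

From mathcomp Require Import all_boot all_fingroup all_solvable.
Set Implicit Arguments. Unset Strict Implicit. Unset Printing Implicit Defensive.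
Local Open Scope group_scope.

Definition supersolvable (gT : finGroupType) (G : {group gT}) : Prop :=
  exists s : seq {group gT},
    [/\ head 1%G s = 1%G :> {set gT},
        last 1%G s = G :> {set gT},
        all (fun H : {group gT} => H <| G) s &
        path (fun H K : {group gT} => (H \subset K) && cyclic (K / H)) 1%G s].

(* derived length: the least n with H^`(n) = 1.  For solvable H such an n
   exists and is < #|H|.+1 (the derived series strictly decreases until it
   reaches 1), so the search below returns the true derived length. *)
Definition dl (gT : finGroupType) (H : {set gT}) : nat :=
  find (fun n => H^`(n) == 1) (iota 0 #|H|.+1).

Definition eta (gT : finGroupType) (G : {group gT}) (X : {set gT}) : nat :=
  #|[set C in classes G | C \subset X]|.

From mathcomp Require Import all_boot all_fingroup all_solvable.
From mathcomp Require Import zify.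
Set Implicit Arguments. Unset Strict Implicit. Unset Printing Implicit Defensive.
Local Open Scope group_scope.

(* Put D := A^-1 * A: a G-invariant set containing 1 and every commutator
   [x, g] with x in A and g in G.  Climb a normal series of G with cyclic
   factors H < K.  If [A, Y] <= K then either D :&: K <= H, whence already
   [A, Y] <= H, or D :&: K meets a new class of G; in the latter case, as
   Aut(K/H) is abelian, the three subgroup lemma gives [A, Y''] <= H.  Each
   new class thus costs two derived steps, so [A, G^(2 (eta D - 1))] = 1.
   Finally, if z = a b is central with a in A and b in B, then z A^-1 = B,
   so z D = B A = A B, and translation by z maps classes to classes. *)

Lemma find_iota_leq (p : pred nat) m n : p n -> find p (iota 0 m) <= n.
Proof.
move=> pn; case: (ltnP n m) => [ltnm | lemn].
  rewrite leqNgt; apply/negP => /(before_find 0).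
  by rewrite nth_iota // add0n pn.
by apply: leq_trans (find_size _ _) _; rewrite size_iota.
Qed.

Section DerivedCommutators.
Variable gT : finGroupType.
Implicit Types (A : {set gT}) (G H K X Y : {group gT}).

Lemma dergD Y m n : (Y^`(n))^`(m) = Y^`(m + n).
Proof. by elim: m => // m IHm; rewrite addSn !dergSn IHm. Qed.

Lemma der_sub_leq Y m n : m <= n -> Y^`(n) \subset Y^`(m).
Proof. by move=> lemn; rewrite -(subnK lemn) -dergD der_sub. Qed.

Lemma dl_quotient_leq G H n : G \subset 'N(H) -> G^`(n) \subset H -> dl (G / H) <= n.
Proof.
by move=> nHG sGnH; apply: find_iota_leq; rewrite -quotient_der // quotientS1.
Qed.

Lemma der1_sub_cent_cyclic K Y : cyclic K -> Y \subset 'N(K) -> Y^`(1) \subset 'C(K).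
Proof.
move=> cycK nKY; rewrite -ker_conj_aut ker_trivg_morphim.
rewrite (subset_trans (der_sub 1 Y)) //= morphim_der //.
have /derG1P -> // : abelian (conj_aut K @* Y).
exact: abelianS (Aut_conj_aut K Y) (Aut_cyclic_abelian cycK).
Qed.

Lemma commg_gen_subl A Y K : A \subset 'N(K) -> Y \subset 'N(K) ->
  [~: A, Y] \subset K -> [~: <<A>>, Y] \subset K.
Proof.
move=> nKA nKY sAYK; rewrite -quotient_cents2 ?gen_subG // quotient_gen //.
by rewrite gen_subG quotient_cents2.
Qed.

Lemma commg_der2_cyclic X K Y : cyclic K -> Y \subset 'N(K) ->
  [~: X, Y] \subset K -> [~: X, Y^`(2)] = 1.
Proof.
move=> cycK nKY sXYK.
have cKY1: Y^`(1) \subset 'C(K) := der1_sub_cent_cyclic cycK nKY.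
have XY1Y1: [~: X, Y^`(1), Y^`(1)] :=: 1.
  apply/trivgP; apply: subset_trans (_ : [~: K, Y^`(1)] \subset [1]).
    by rewrite commgSS // (subset_trans (commgSS (subxx X) (der_sub 1 Y)) sXYK).
  by apply/trivgP/commG1P; rewrite centsC.
have Y1XY1: [~: Y^`(1), X, Y^`(1)] :=: 1 by rewrite (commGC (Y^`(1)) X).
by have := three_subgroup Y1XY1 XY1Y1; rewrite commGC.
Qed.

End DerivedCommutators.

Lemma commg_der2_cyclic_factor (gT : finGroupType) (A : {set gT})
    (H K Y : {group gT}) : H \subset K -> cyclic (K / H) ->
    A \subset 'N(H) -> A \subset 'N(K) -> Y \subset 'N(H) -> Y \subset 'N(K) ->
  [~: A, Y] \subset K -> [~: A, Y^`(2)] \subset H.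
Proof.
move=> sHK cycKH nHA nKA nHY nKY sAYK.
have nHAg: <<A>> \subset 'N(H) by rewrite gen_subG.
apply: subset_trans (commgSS (subset_gen A) (subxx _)) _.
rewrite -quotient_sub1 ?comm_subG ?(subset_trans (der_sub 2 Y)) //.
rewrite quotientR ?(subset_trans (der_sub 2 Y)) // quotient_der //.
rewrite (commg_der2_cyclic (X := (<<A>> / H)%G) cycKH) //.
  exact: quotient_norms.
by rewrite -quotientR // quotientS // commg_gen_subl.
Qed.

Section ClassCount.
Variables (gT : finGroupType) (G : {group gT}).
Implicit Types (X Z : {set gT}).

Lemma eta_subset X Z : X \subset Z -> eta G X <= eta G Z.
Proof.
move=> sXZ; apply/subset_leq_card/subsetP => C; rewrite !inE.
by case/andP=> -> /subset_trans->.
Qed.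

Lemma eta_proper X Z u : X \subset Z -> G \subset 'N(Z) ->
  u \in G -> u \in Z -> u \notin X -> eta G X < eta G Z.
Proof.
move=> sXZ nZG Gu Zu notXu; apply/proper_card/properP; split.
  by apply/subsetP => C; rewrite !inE => /andP[-> /subset_trans->].
exists (u ^: G); first by rewrite inE mem_classes // class_sub_norm.
by rewrite inE negb_and; apply/orP; right; apply/subsetPn; exists u;
  rewrite ?class_refl.
Qed.

Lemma eta_gt0 X : 1 \in X -> 0 < eta G X.
Proof.
move=> X1; rewrite card_gt0; apply/set0Pn; exists (1 ^: G).
by rewrite inE mem_classes //= class1G sub1set.
Qed.

Lemma lcoset_class_center z c : z \in 'Z(G) -> z *: (c ^: G) = (z * c) ^: G.
Proof.
case/centerP=> _ cGz.
have zJ g : g \in G -> z ^ g = z by move=> Gg; rewrite /conjg cGz ?mulKg.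
apply/setP => w; apply/mulsgP/imsetP.
  by case=> _ _ /set1P-> /imsetP[g Gg ->] ->; exists g; rewrite // conjMg zJ.
by case=> g Gg ->; exists z (c ^ g); rewrite ?set11 ?memJ_class ?conjMg ?zJ.
Qed.

Lemma eta_lcoset_center z X : z \in 'Z(G) -> eta G X <= eta G (z *: X).
Proof.
move=> Zz; rewrite /eta -(card_imset _ (@lcoset_inj _ z)).
apply/subset_leq_card/subsetP => w /imsetP[C]; rewrite inE => /andP[clC sCX] ->{w}.
case/imsetP: clC => c Gc defC; rewrite inE mulgS // andbT defC.
by rewrite lcoset_class_center // mem_classes // groupM //; case/centerP: Zz.
Qed.

End ClassCount.

Lemma norms_invg (gT : finGroupType) (A B : {set gT}) :
  B \subset 'N(A) -> B \subset 'N(A^-1).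
Proof.
move=> nAB; apply/subsetP=> g Bg; rewrite inE; apply/subsetP=> _ /imsetP[y Ay ->].
by move: Ay; rewrite !inE -conjVg memJ_norm ?(subsetP nAB).
Qed.

Section CommutatorDepth.
Variables (gT : finGroupType) (G : {group gT}) (A : {set gT}).
Hypotheses (sAG : A \subset G) (nAG : G \subset 'N(A)) (ntA : A != set0).
Local Notation D := (A^-1 * A).

Let sDG : D \subset G.
Proof. by rewrite mul_subG // -invGid invSg. Qed.

Let nDG : G \subset 'N(D).
Proof. by rewrite normsM ?norms_invg. Qed.

Let D1 : 1 \in D.
Proof.
by case/set0Pn: ntA => a Aa; rewrite -(mulVg a) mem_mulg // inE invgK.
Qed.

Let commg_mulVs x g : x \in A -> g \in G -> [~ x, g] \in D.
Proof.
by move=> Ax Gg; rewrite commgEl mem_mulg ?memJ_norm ?(subsetP nAG) ?inE ?invgK.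
Qed.

Definition comm_der_bound (H : {set gT}) : Prop :=
  forall Y : {group gT}, Y \subset G -> [~: A, Y] \subset H ->
    [~: A, Y^`(2 * (eta G (D :&: H)).-1)] = 1.

Lemma commg_sub_mulVsI (Y H : {group gT}) (K : {set gT}) : Y \subset G ->
  [~: A, Y] \subset K -> D :&: K \subset H -> [~: A, Y] \subset H.
Proof.
move=> sYG sAYK sDKH; rewrite gen_subG; apply/subsetP=> _ /imset2P[x y Ax Yy ->].
apply: (subsetP sDKH).
by rewrite inE commg_mulVs ?(subsetP sYG) ?(subsetP sAYK) ?mem_commg.
Qed.

Lemma comm_der_bound1 : comm_der_bound 1.
Proof.
move=> Y _ sAY1; apply/trivgP.
exact: subset_trans (commgSS (subxx A) (der_sub _ Y)) sAY1.
Qed.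

Lemma comm_der_bound_cyclic_step (H K : {group gT}) : H <| G -> K <| G ->
  H \subset K -> cyclic (K / H) -> comm_der_bound H -> comm_der_bound K.
Proof.
case/andP=> sHG nHG /andP[sKG nKG] sHK cycKH boundH Y sYG sAYK.
apply/trivgP; case: (boolP (D :&: K \subset H)) => [sDKH | /subsetPn[u DKu notHu]].
  rewrite -(boundH Y sYG (commg_sub_mulVsI sYG sAYK sDKH)) commgSS ?der_sub_leq //.
  by rewrite leq_mul2l -!subn1 leq_sub2r ?eta_subset ?setIS.
have etaHK: eta G (D :&: H) < eta G (D :&: K).
  apply: (eta_proper (u := u)); rewrite ?setIS ?normsI //.
  - by case/setIP: DKu => /(subsetP sDG).
  - by rewrite inE negb_and notHu orbT.
have etaH_gt0: 0 < eta G (D :&: H) by rewrite eta_gt0 // inE D1 group1.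
have sAY2H: [~: A, Y^`(2)] \subset H.
  by apply: commg_der2_cyclic_factor sHK cycKH _ _ _ _ sAYK;
    rewrite ?(subset_trans sAG) ?(subset_trans sYG).
rewrite -(boundH _ (subset_trans (der_sub 2 Y) sYG) sAY2H) /= dergD commgSS //.
rewrite der_sub_leq // -mulnSr prednK // leq_mul2l /= -ltnS prednK //.
exact: leq_ltn_trans etaHK.
Qed.

Lemma comm_der_bound_series (s : seq {group gT}) (H : {group gT}) :
    H <| G -> comm_der_bound H -> all (fun K : {group gT} => K <| G) s ->
    path (fun H K : {group gT} => (H \subset K) && cyclic (K / H)) H s ->
  comm_der_bound (last H s).
Proof.
elim: s H => //= K s IHs H nHG boundH /andP[nKG nsG] /andP[/andP[sHK cycKH] chain].
exact: IHs (comm_der_bound_cyclic_step nHG nKG sHK cycKH boundH) nsG chain.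
Qed.

Lemma supersolvable_der_sub_cent :
  supersolvable G -> G^`(2 * (eta G D).-1) \subset 'C_G(A).
Proof.
case=> s [_ lastG nsG chain].
have := comm_der_bound_series (normal1 G) comm_der_bound1 nsG chain.
rewrite lastG => /(_ G (subxx G) (comm_subG sAG (subxx G))).
rewrite [D :&: _](setIidPl sDG) => AG1.
by rewrite subsetI der_sub; apply/commG1P; rewrite commGC.
Qed.

End CommutatorDepth.

Lemma lcoset_mulVs_class (gT : finGroupType) (G : {group gT}) (a b : gT) :
  a \in G -> a * b \in 'Z(G) ->
  (a * b) *: ((a ^: G)^-1 * a ^: G) = b ^: G * a ^: G.
Proof.
move=> Ga Zab; rewrite mulgA -classVg lcoset_class_center //.
by case/centerP: Zab => _ /(_ a Ga) cab; rewrite (commuteV cab) mulKg.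
Qed.

Theorem corollaryC (gT : finGroupType) (G : {group gT}) (A B : {set gT}) :
  supersolvable G ->
  A \in classes G -> B \in classes G ->
  A * B :&: 'Z(G) != set0 ->
  dl (G / 'C_G(A)) <= (2 * eta G (A * B)%g - 1)%N.
Proof.
move=> ssG /imsetP[a0 Ga0 ->] /imsetP[b0 Gb0 ->].
case/set0Pn=> _ /setIP[/mulsgP[a b a0Ga b0Gb ->] Zab].
rewrite -(class_eqP a0Ga) -(class_eqP b0Gb) in Zab *.
have [Ga Gb]: a \in G /\ b \in G.
  by split; [apply: subsetP a0Ga | apply: subsetP b0Gb]; rewrite class_subG.
have ntA: a ^: G != set0 by apply/set0Pn; exists a; apply: class_refl.
have sGnC := supersolvable_der_sub_cent (class_subG Ga (subxx G))
  (class_norm a G) ntA ssG.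
apply: leq_trans (dl_quotient_leq _ sGnC) _.
  by rewrite normsI ?normG ?norms_cent ?class_norm.
have etaD: eta G ((a ^: G)^-1 * a ^: G) <= eta G (a ^: G * b ^: G).
  rewrite -(normC (subset_trans (class_subG Gb (subxx G)) (class_norm a G))).
  by rewrite -lcoset_mulVs_class ?eta_lcoset_center.
move: etaD; move: (eta G _) (eta G _); lia.
Qed.
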